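(* Let $X$ be a doubling metric space with $C_0$-bounded turning. There is an integer $M$, depending only on the doubling constant and $C_0$, such that for every $r>0$ and every pair $x,x'\in X$ with $d(x,x')=8r$ there is a sequence $x=x_0,x_1,\dots,x_N=x'$ with $N\le M$ of points in $B(x,C_0d(x,x'))$ such that $d(x_0,x_1)=2r/3$ and $$d(x_j,x_{j+1})\le d(x_{j-1},x_j)-\frac{r}{3M}\quad(1\le j\le N-1),$$ with equality whenever $j<N-1$.
   Context: $X$ has $C_0$-bounded turning if any two points $x_1,x_2$ lie in a continuum of diameter at most $C_0d(x_1,x_2)$. Doubling: there is $N_0$ such that for every ball $B(x,s)$, every $s/2$-separated subset of $B(x,s)$ has at most $N_0$ points. *)

From Stdlib Require Import Reals List.
Open Scope R_scope.

Definition is_metric {X : Type} (d : X -> X -> R) : Prop :=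
  (forall x y, 0 <= d x y) /\
  (forall x y, d x y = 0 <-> x = y) /\
  (forall x y, d x y = d y x) /\
  (forall x y z, d x z <= d x y + d y z).

(* Sequential compactness of a subset K (equivalent to compactness in metric spaces). *)
Definition compact_set {X : Type} (d : X -> X -> R) (K : X -> Prop) : Prop :=
  forall u : nat -> X, (forall n, K (u n)) ->
    exists (phi : nat -> nat) (l : X),
      (forall n, (phi n < phi (S n))%nat) /\ K l /\
      (forall eps, 0 < eps -> exists n0, forall n, (n0 <= n)%nat -> d (u (phi n)) l < eps).

Definition rel_open {X : Type} (d : X -> X -> R) (K U : X -> Prop) : Prop :=
  forall x, K x -> U x -> exists eps, 0 < eps /\ forall y, K y -> d x y < eps -> U y.

Definition connected_set {X : Type} (d : X -> X -> R) (K : X -> Prop) : Prop :=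
  ~ exists U V : X -> Prop,
      rel_open d K U /\ rel_open d K V /\
      (forall x, K x -> U x \/ V x) /\
      (forall x, K x -> U x -> V x -> False) /\
      (exists x, K x /\ U x) /\ (exists x, K x /\ V x).

Definition continuum {X : Type} (d : X -> X -> R) (K : X -> Prop) : Prop :=
  (exists x, K x) /\ compact_set d K /\ connected_set d K.

Definition bounded_turning {X : Type} (d : X -> X -> R) (C0 : R) : Prop :=
  forall x1 x2, exists K : X -> Prop,
    continuum d K /\ K x1 /\ K x2 /\
    (forall y z, K y -> K z -> d y z <= C0 * d x1 x2).

Definition doubling {X : Type} (d : X -> X -> R) (N0 : nat) : Prop :=
  forall (x : X) (s : R) (l : list X), 0 < s ->
    NoDup l ->
    (forall y, In y l -> d x y < s) ->
    (forall y z, In y l -> In z l -> y <> z -> s / 2 <= d y z) ->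
    (length l <= N0)%nat.

From Stdlib Require Import Reals List Lia Lra Classical IndefiniteDescription.
Open Scope R_scope.

(* Inside a continuum [K] of diameter [<= C0 d(x,x')] through [x] and [x'],
   build the chain greedily: from [p j], move to a point at distance about
   [target j = 2r/3 - j r/(3M)] that is still joined to [x'] by an [eps]-chain
   of [K] avoiding the earlier balls [B(p i, target i)]; it exists because such
   a chain from [x'] to [p j] must cross the annulus around [p j].  The points
   built are [r/3]-separated in [B(x, 9 C0 r)], so iterated doubling forces the
   construction to reach [x'] within [M = N0^(m+1) + 1] steps.  Letting [eps ->
   0], compactness of [K] produces a chain with exact gaps. *)

Definition infinite_set (I : nat -> Prop) : Prop := forall n, exists m, (n <= m)%nat /\ I m.

Lemma infinite_pigeonhole (B : nat) (f : nat -> nat) : (forall n, (f n <= B)%nat) ->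
  exists v, infinite_set (fun n => f n = v).
Proof.
  revert f; induction B as [|B IH]; intros f Hf.
  { exists O; intros n; exists n; specialize (Hf n); split; auto; lia. }
  destruct (classic (infinite_set (fun n => f n = S B))) as [Htop | Htop]; eauto.
  apply not_all_ex_not in Htop as [n0 Hn0].
  destruct (IH (fun m => f (m + n0)%nat)) as [v Hv].
  { intros m; specialize (Hf (m + n0)%nat).
    assert (f (m + n0)%nat <> S B).
    { intros Heq; apply Hn0; exists (m + n0)%nat; split; auto; lia. }
    lia. }
  exists v; intros n; destruct (Hv n) as [m [Hm Hfm]]; exists (m + n0)%nat; split; auto; lia.
Qed.

Lemma pow2_unbounded (y : R) : exists m : nat, y <= 2 ^ S m.
Proof.
  destruct (Pow_x_infinity 2 ltac:(rewrite Rabs_right; lra) y) as [m Hm].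
  exists m; specialize (Hm (S m) ltac:(lia)).
  rewrite Rabs_right in Hm; [lra | apply Rle_ge, pow_le; lra].
Qed.

Definition update {A : Type} (p : nat -> A) (k : nat) (a : A) : nat -> A :=
  fun j => if Nat.eqb j k then a else p j.

Definition target (r : R) (M j : nat) : R := 2 * r / 3 - INR j * (r / (3 * INR M)).

Lemma target_S r M j : target r M (S j) = target r M j - r / (3 * INR M).
Proof. unfold target; rewrite S_INR; ring. Qed.

Lemma target_ge r M j : 0 < r -> (0 < M)%nat -> (j <= M)%nat -> r / 3 <= target r M j.
Proof.
  intros r_pos M_pos Hj; unfold target.
  apply le_INR in Hj; apply lt_INR in M_pos; simpl in M_pos.
  assert (INR j * (r / (3 * INR M)) <= INR M * (r / (3 * INR M))).
  { apply Rmult_le_compat_r; auto; apply Rlt_le, Rdiv_lt_0_compat; lra. }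
  replace (INR M * (r / (3 * INR M))) with (r / 3) in * by (field; lra); lra.
Qed.

Section MetricSpace.

Context {X : Type} (d : X -> X -> R).
Hypothesis d_metric : is_metric d.

Lemma dist_ge0 x y : 0 <= d x y.
Proof. now destruct d_metric. Qed.

Lemma dist_eq0 x y : d x y = 0 <-> x = y.
Proof. now destruct d_metric as [_ []]. Qed.

Lemma dist_xx x : d x x = 0.
Proof. now apply dist_eq0. Qed.

Lemma dist_sym x y : d x y = d y x.
Proof. now destruct d_metric as [_ [_ []]]. Qed.

Lemma dist_triangle x y z : d x z <= d x y + d y z.
Proof. now destruct d_metric as [_ [_ [_ H]]]. Qed.

Lemma dist_le_perturb a b a' b' : d a b <= d a' b' + d a a' + d b b'.
Proof.
  pose proof (dist_triangle a a' b); pose proof (dist_triangle a' b' b).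
  rewrite (dist_sym b' b) in *; lra.
Qed.

Lemma eq_of_dist_small x y : (forall eps, 0 < eps -> d x y < eps) -> x = y.
Proof.
  intros Hsmall; apply dist_eq0.
  destruct (Rle_lt_or_eq_dec _ _ (dist_ge0 x y)) as [Hpos|]; auto.
  specialize (Hsmall _ Hpos); lra.
Qed.

Inductive chain (eps : R) (P : X -> Prop) (a : X) : X -> Prop :=
| chain_refl : P a -> chain eps P a a
| chain_step b c : chain eps P a b -> P c -> d b c < eps -> chain eps P a c.

Lemma chain_last eps P a b : chain eps P a b -> P b.
Proof. now induction 1. Qed.

Lemma chain_mono eps (P Q : X -> Prop) a b :
  (forall z, P z -> Q z) -> chain eps P a b -> chain eps Q a b.
Proof.
  intros PQ; induction 1; [apply chain_refl | eapply chain_step]; eauto.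
Qed.

Lemma connected_chain K eps a b :
  connected_set d K -> 0 < eps -> K a -> K b -> chain eps K a b.
Proof.
  intros Kconn eps_pos Ka Kb; apply NNPP; intros Hnot; apply Kconn.
  exists (chain eps K a), (fun q => ~ chain eps K a q).
  repeat split.
  - intros z Kz Hz; exists eps; split; auto.
    intros y Ky Hy; eapply chain_step; eauto.
  - intros z Kz Hz; exists eps; split; auto.
    intros y Ky Hy Hay; apply Hz; eapply chain_step; eauto.
    now rewrite dist_sym.
  - intros z _; apply classic.
  - intros z _ Hz Hnz; auto.
  - exists a; split; auto; now apply chain_refl.
  - exists b; split; auto.
Qed.

(* Walking along a chain from [a] to [c] with [s <= d c a], the last point
   before the chain first enters [B(c,s)] lies in the annulus
   [s <= d c _ < s + eps]. *)
Lemma chain_exit eps P a c s :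
  0 < s -> s <= d c a -> chain eps P a c ->
  exists t, chain eps (fun q => P q /\ s <= d c q) a t /\ s <= d c t < s + eps.
Proof.
  intros s_pos Hsa Hac.
  set (P' := fun q => P q /\ s <= d c q).
  assert (Hwalk : forall z, chain eps P a z ->
    chain eps P' a z \/ exists t, chain eps P' a t /\ s <= d c t < s + eps).
  { induction 1 as [Pa | b z _ [Hb | Hexit] Pz Hbz]; auto.
    - left; apply chain_refl; split; auto.
    - destruct (Rle_lt_dec s (d c z)) as [Hz | Hz].
      + left; eapply chain_step; eauto; split; auto.
      + right; exists b; split; auto.
        destruct (chain_last _ _ _ _ Hb) as [_ Hcb]; split; auto.
        pose proof (dist_triangle c z b); rewrite (dist_sym z b) in *; lra. }
  destruct (Hwalk c Hac) as [Hc | Hexit]; auto.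
  destruct (chain_last _ _ _ _ Hc) as [_ Hcc]; rewrite dist_xx in Hcc; lra.
Qed.

Definition separated (rho : R) (l : list X) : Prop :=
  forall a b, In a l -> In b l -> a <> b -> rho <= d a b.

Lemma separated_net rho (l : list X) : 0 < rho ->
  exists g, incl g l /\ NoDup g /\ separated rho g /\
    forall z, In z l -> exists a, In a g /\ d a z < rho.
Proof.
  intros rho_pos; induction l as [|z l [g [Hincl [Hnd [Hsep Hnet]]]]].
  { exists nil; split; [|split; [constructor|split]]; easy. }
  destruct (classic (exists a, In a g /\ d a z < rho)) as [Hnear | Hfar].
  - exists g; split; [|split; [|split]]; auto.
    + intros y Hy; right; auto.
    + intros y [<- | Hy]; auto.
  - assert (Hzg : forall a, In a g -> rho <= d a z).
    { intros a Ha; apply Rnot_lt_le; intros Hlt; apply Hfar; eauto. }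
    exists (z :: g); split; [|split; [|split]].
    + intros y [<- | Hy]; [left | right]; auto.
    + constructor; [|exact Hnd].
      intros Hz; specialize (Hzg z Hz); rewrite dist_xx in Hzg; auto; lra.
    + intros a b [<- | Ha] [<- | Hb] Hab; try congruence; auto.
      rewrite dist_sym; auto.
    + intros y [<- | Hy].
      * exists z; split; [left | rewrite dist_xx]; auto.
      * destruct (Hnet y Hy) as [a [Ha Hay]]; exists a; split; auto; right; auto.
Qed.

Definition ball_part (a : X) (rho : R) (l : list X) : list X :=
  filter (fun z => if Rlt_dec (d a z) rho then true else false) l.

Lemma in_ball_part a rho l z : In z (ball_part a rho l) <-> In z l /\ d a z < rho.
Proof.
  unfold ball_part; rewrite filter_In.
  destruct (Rlt_dec (d a z) rho); intuition congruence.
Qed.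

Lemma length_concat_map_le {A B} (f : A -> list B) (g : list A) (b : nat) :
  (forall a, In a g -> (length (f a) <= b)%nat) ->
  (length (concat (map f g)) <= length g * b)%nat.
Proof.
  induction g as [|a g IH]; intros Hf; simpl; auto.
  rewrite length_app; specialize (IH (fun a' h => Hf a' (or_intror h))).
  specialize (Hf a (or_introl eq_refl)); lia.
Qed.

(* Cover [l] by balls of radius [s/2] around a maximal [s/2]-separated
   subfamily: doubling bounds the number of balls, induction the number of
   points in each. *)
Lemma doubling_iter N0 : doubling d N0 ->
  forall m y s l, 0 < s -> NoDup l -> (forall z, In z l -> d y z < s) ->
  separated (s / 2 ^ S m) l -> (length l <= N0 ^ S m)%nat.
Proof.
  intros Hdbl; induction m as [|m IH]; intros y s l s_pos Hnd Hball Hsep.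
  { simpl; rewrite Nat.mul_1_r; apply (Hdbl y s l); auto.
    intros a b Ha Hb Hab; specialize (Hsep a b Ha Hb Hab).
    now replace (s / 2) with (s / 2 ^ 1) by (simpl; field). }
  destruct (separated_net (s / 2) l ltac:(lra)) as [g [Hincl [Hgnd [Hgsep Hnet]]]].
  assert (Hg : (length g <= N0)%nat).
  { apply (Hdbl y s g); auto. }
  assert (Hparts : forall a, In a g -> (length (ball_part a (s / 2) l) <= N0 ^ S m)%nat).
  { intros a Ha; apply (IH a (s / 2)); [lra | apply NoDup_filter; auto | |].
    - intros z Hz; apply in_ball_part in Hz; tauto.
    - intros u v Hu Hv Huv; apply in_ball_part in Hu; apply in_ball_part in Hv.
      specialize (Hsep u v (proj1 Hu) (proj1 Hv) Huv).
      replace (s / 2 / 2 ^ S m) with (s / 2 ^ S (S m)); auto.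
      simpl; field; apply pow_nonzero; lra. }
  assert (Hcover : (length l <= length (concat (map (fun a => ball_part a (s / 2) l) g)))%nat).
  { apply NoDup_incl_length; auto; intros z Hz.
    destruct (Hnet z Hz) as [a [Ha Haz]]; apply in_concat.
    exists (ball_part a (s / 2) l); split; [apply in_map_iff; exists a; auto | apply in_ball_part; auto]. }
  pose proof (length_concat_map_le _ g _ Hparts).
  change (N0 ^ S (S m))%nat with (N0 * N0 ^ S m)%nat; nia.
Qed.

Lemma doubling_iter_fun N0 m y s k (p : nat -> X) : doubling d N0 -> 0 < s ->
  (forall j, (j <= k)%nat -> d y (p j) < s) ->
  (forall i j, (i <= k)%nat -> (j <= k)%nat -> i <> j -> s / 2 ^ S m <= d (p i) (p j)) ->
  (S k <= N0 ^ S m)%nat.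
Proof.
  intros Hdbl s_pos Hball Hsep.
  assert (Hsep_pos : 0 < s / 2 ^ S m) by (apply Rdiv_lt_0_compat; auto; apply pow_lt; lra).
  assert (Hinj : forall i j, (i <= k)%nat -> (j <= k)%nat -> p i = p j -> i = j).
  { intros i j Hi Hj Hij; destruct (Nat.eq_dec i j) as [|Hne]; auto.
    specialize (Hsep i j Hi Hj Hne); rewrite Hij, dist_xx in Hsep; auto; lra. }
  replace (S k) with (length (map p (seq 0 (S k)))) by now rewrite length_map, length_seq.
  apply (doubling_iter N0 Hdbl m y s); auto.
  - apply NoDup_map_NoDup_ForallPairs; [|apply seq_NoDup].
    intros i j Hi Hj; apply in_seq in Hi, Hj; apply Hinj; lia.
  - intros z Hz; apply in_map_iff in Hz as [j [<- Hj]]; apply in_seq in Hj; apply Hball; lia.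
  - intros a b Ha Hb Hab; apply in_map_iff in Ha as [i [<- Hi]].
    apply in_map_iff in Hb as [j [<- Hj]]; apply in_seq in Hi, Hj.
    apply Hsep; try lia; intros ->; auto.
Qed.


Definition converges_along (J : nat -> Prop) (u : nat -> X) (l : X) : Prop :=
  forall eps, 0 < eps -> exists n0, forall n, (n0 <= n)%nat -> J n -> d (u n) l < eps.

Lemma infinite_subseq_converges K (I : nat -> Prop) (u : nat -> X) :
  compact_set d K -> infinite_set I -> (forall n, I n -> K (u n)) ->
  exists l J, K l /\ infinite_set J /\ (forall n, J n -> I n) /\ converges_along J u l.
Proof.
  intros Kcomp Iinf Ku.
  destruct (functional_choice _ Iinf) as [next Hnext].
  set (e := fix e k := match k with O => next O | S k => next (S (e k)) end).
  assert (e_incr : forall k, (e k < e (S k))%nat).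
  { intros k; simpl; specialize (Hnext (S (e k))); lia. }
  assert (e_mono : forall a b, (a < b)%nat -> (e a < e b)%nat).
  { intros a b Hab; induction Hab; [apply e_incr | specialize (e_incr m); lia]. }
  assert (e_I : forall k, I (e k)) by (intros [|k]; apply Hnext).
  destruct (Kcomp (fun k => u (e k)) (fun k => Ku _ (e_I k)))
    as [phi [l [phi_incr [Kl Hconv]]]].
  assert (phi_ge : forall n, (n <= phi n)%nat).
  { induction n; [lia | specialize (phi_incr n); lia]. }
  assert (e_ge : forall n, (n <= e n)%nat).
  { induction n; [lia | specialize (e_incr n); lia]. }
  exists l, (fun n => exists k, n = e (phi k)); repeat split; auto.
  - intros n; exists (e (phi n)); split; [|exists n; auto].
    specialize (phi_ge n); specialize (e_ge (phi n)); lia.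
  - intros n [k ->]; auto.
  - intros eps eps_pos; destruct (Hconv eps eps_pos) as [n0 Hn0].
    exists (e (phi n0)); intros n Hn [k ->]; apply Hn0.
    destruct (Nat.le_gt_cases n0 k) as [|Hk]; auto.
    assert (Hphi : (phi k < phi n0)%nat).
    { clear -phi_incr Hk; induction Hk; [apply phi_incr | specialize (phi_incr m); lia]. }
    specialize (e_mono _ _ Hphi); lia.
Qed.

Lemma infinite_subseq_converges_tuple K : compact_set d K ->
  forall m (I : nat -> Prop) (q : nat -> nat -> X), infinite_set I ->
  (forall n j, I n -> (j < m)%nat -> K (q n j)) ->
  exists (l : nat -> X) J, (forall j, (j < m)%nat -> K (l j)) /\ infinite_set J /\
    (forall n, J n -> I n) /\ forall j, (j < m)%nat -> converges_along J (fun n => q n j) (l j).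
Proof.
  intros Kcomp m; induction m as [|m IH]; intros I q Iinf Kq.
  { exists (q O), I; repeat split; auto; intros; lia. }
  destruct (IH I q Iinf (fun n j h hj => Kq n j h ltac:(lia))) as [l [J [Kl [Jinf [JI Hconv]]]]].
  destruct (infinite_subseq_converges K J (fun n => q n m) Kcomp Jinf
             (fun n h => Kq n m (JI n h) ltac:(lia))) as [lm [J' [Klm [J'inf [J'J Hconvm]]]]].
  exists (fun j => if Nat.eqb j m then lm else l j), J'; repeat split; auto.
  - intros j Hj; destruct (Nat.eqb_spec j m); auto; apply Kl; lia.
  - intros j Hj; destruct (Nat.eqb_spec j m) as [->|Hne]; auto.
    intros eps eps_pos; destruct (Hconv j ltac:(lia) eps eps_pos) as [n0 Hn0].
    exists n0; auto.
Qed.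

Lemma converges_along_common J u v a b :
  infinite_set J -> converges_along J u a -> converges_along J v b ->
  forall eps, 0 < eps ->
    exists n, J n /\ d (u n) a < eps /\ d (v n) b < eps /\ / INR (S n) < eps.
Proof.
  intros Jinf Hu Hv eps eps_pos.
  destruct (Hu eps eps_pos) as [n0 H0], (Hv eps eps_pos) as [n1 H1].
  destruct (archimed_cor1 eps eps_pos) as [n2 [Hn2 n2_pos]].
  destruct (Jinf (Nat.max n0 (Nat.max n1 n2))) as [n [Hn Jn]].
  exists n; split; [|split; [|split]]; auto; [apply H0 | apply H1 |]; auto; try lia.
  apply Rle_lt_trans with (/ INR n2); auto.
  apply Rinv_le_contravar; [apply lt_0_INR; lia | apply le_INR; lia].
Qed.

Lemma limit_const J u a l :
  infinite_set J -> converges_along J u l -> (forall n, J n -> u n = a) -> l = a.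
Proof.
  intros Jinf Hu Hua; symmetry; apply eq_of_dist_small; intros eps eps_pos.
  destruct (converges_along_common J u u l l Jinf Hu Hu eps eps_pos) as [n [Jn [Hn _]]].
  now rewrite <- (Hua n Jn).
Qed.

Lemma dist_limit_le J u v a b c :
  infinite_set J -> converges_along J u a -> converges_along J v b ->
  (forall n, J n -> d (u n) (v n) <= c + / INR (S n)) -> d a b <= c.
Proof.
  intros Jinf Hu Hv Hle; apply Rnot_lt_le; intros Hlt.
  set (eps := (d a b - c) / 3).
  destruct (converges_along_common J u v a b Jinf Hu Hv eps ltac:(unfold eps; lra))
    as [n [Jn [Hun [Hvn Hn]]]].
  specialize (Hle n Jn); pose proof (dist_le_perturb a b (u n) (v n)).
  rewrite (dist_sym a (u n)), (dist_sym b (v n)) in *; unfold eps in *; lra.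
Qed.

Lemma dist_limit_ge J u v a b c :
  infinite_set J -> converges_along J u a -> converges_along J v b ->
  (forall n, J n -> c <= d (u n) (v n)) -> c <= d a b.
Proof.
  intros Jinf Hu Hv Hge; apply Rnot_lt_le; intros Hlt.
  set (eps := (c - d a b) / 3).
  destruct (converges_along_common J u v a b Jinf Hu Hv eps ltac:(unfold eps; lra))
    as [n [Jn [Hun [Hvn _]]]].
  specialize (Hge n Jn); pose proof (dist_le_perturb (u n) (v n) a b).
  unfold eps in *; lra.
Qed.

Section Greedy.

Variables (K : X -> Prop) (x x' : X) (r : R) (M : nat) (eps : R).

Definition far_from (p : nat -> X) (k : nat) (q : X) : Prop :=
  K q /\ forall j, (j < k)%nat -> target r M j <= d (p j) q.

Definition partial_chain (k : nat) (p : nat -> X) : Prop :=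
  p O = x /\ (forall j, (j <= k)%nat -> K (p j)) /\
  (forall j, (j < k)%nat -> d (p j) (p (S j)) < target r M j + eps) /\
  (forall i j, (i < j <= k)%nat -> target r M i <= d (p i) (p j)) /\
  chain eps (far_from p k) x' (p k).

Definition approx_chain (N : nat) (p : nat -> X) : Prop :=
  p O = x /\ p N = x' /\ (forall j, (j <= N)%nat -> K (p j)) /\ (2 <= N <= M)%nat /\
  (forall j, (S j < N)%nat -> target r M j <= d (p j) (p (S j)) < target r M j + eps) /\
  d (p (N - 1)%nat) (p N) <= target r M (N - 1).

Hypotheses (K_conn : connected_set d K) (Kx : K x) (Kx' : K x')
  (r_pos : 0 < r) (dxx' : d x x' = 8 * r) (eps_pos : 0 < eps).

Lemma partial_chain_start : partial_chain 0 (fun _ => x).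
Proof.
  split; [|split; [|split; [|split]]]; auto; try (intros; lia).
  apply (chain_mono eps K); [intros z Kz; split; auto; intros; lia |].
  now apply connected_chain.
Qed.

Lemma partial_chain_stop k p : partial_chain k p ->
  d (p k) x' <= target r M k -> (S k <= M)%nat -> approx_chain (S k) (update p (S k) x').
Proof.
  intros [p0 [Kp [Hgap [Hsep _]]]] Hstop HkM.
  assert (k_pos : k <> O).
  { intros ->; rewrite p0, dxx' in Hstop; unfold target in Hstop; simpl in Hstop; lra. }
  unfold update; split; [|split; [|split; [|split; [|split]]]].
  - now simpl.
  - now rewrite Nat.eqb_refl.
  - intros j Hj; destruct (Nat.eqb_spec j (S k)); auto; apply Kp; lia.
  - lia.
  - intros j Hj; destruct (Nat.eqb_spec j (S k)); [lia|].
    destruct (Nat.eqb_spec (S j) (S k)); [lia|].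
    split; [apply Hsep | apply Hgap]; lia.
  - rewrite Nat.eqb_refl; replace (S k - 1)%nat with k by lia.
    now destruct (Nat.eqb_spec k (S k)); [lia|].
Qed.

Lemma partial_chain_extend k p : partial_chain k p ->
  target r M k < d (p k) x' -> (0 < M)%nat -> (k <= M)%nat ->
  exists q, partial_chain (S k) (update p (S k) q).
Proof.
  intros [p0 [Kp [Hgap [Hsep Hch]]]] Hgo M_pos HkM.
  assert (target_pos : 0 < target r M k) by (pose proof (target_ge r M k r_pos M_pos HkM); lra).
  destruct (chain_exit eps _ x' (p k) _ target_pos (Rlt_le _ _ Hgo) Hch) as [q [Hq Hqk]].
  destruct (chain_last _ _ _ _ Hq) as [[Kq Hqfar] _].
  exists q; unfold update; split; [|split; [|split; [|split]]].
  - now simpl.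
  - intros j Hj; destruct (Nat.eqb_spec j (S k)); auto; apply Kp; lia.
  - intros j Hj; destruct (Nat.eqb_spec j (S k)); [lia|].
    destruct (Nat.eqb_spec (S j) (S k)) as [Hjk|]; [injection Hjk as ->; tauto | apply Hgap; lia].
  - intros i j Hij; destruct (Nat.eqb_spec i (S k)); [lia|].
    destruct (Nat.eqb_spec j (S k)) as [->|]; [| apply Hsep; lia].
    destruct (Nat.eqb_spec i k) as [->|]; [tauto | apply Hqfar; lia].
  - rewrite Nat.eqb_refl; revert Hq; apply chain_mono.
    intros z [[Kz Hzfar] Hzk]; split; auto; intros j Hj.
    destruct (Nat.eqb_spec j (S k)); [lia|].
    destruct (Nat.eqb_spec j k) as [->|]; [auto | apply Hzfar; lia].
Qed.

(* The points of a partial chain are [r/3]-separated and lie in [B(x, 9 C0 r)]. *)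
Lemma partial_chain_length N0 C0 m k p : doubling d N0 ->
  (forall y z, K y -> K z -> d y z <= C0 * d x x') -> 27 * C0 <= 2 ^ S m ->
  (0 < M)%nat -> (k <= M)%nat -> partial_chain k p -> (S k <= N0 ^ S m)%nat.
Proof.
  intros Hdbl Kdiam Hm M_pos HkM [_ [Kp [_ [Hsep _]]]].
  assert (C0_ge1 : 1 <= C0).
  { specialize (Kdiam x x' Kx Kx'); rewrite dxx' in Kdiam; nra. }
  assert (Hsep3 : forall i j, (i < j <= k)%nat -> r / 3 <= d (p i) (p j)).
  { intros i j Hij; pose proof (target_ge r M i r_pos M_pos ltac:(lia)).
    specialize (Hsep i j Hij); lra. }
  apply (doubling_iter_fun N0 m x (9 * C0 * r) k p Hdbl); [nra | |].
  - intros j Hj; specialize (Kdiam x (p j) Kx (Kp j Hj)); rewrite dxx' in Kdiam; nra.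
  - intros i j Hi Hj Hij.
    apply Rle_trans with (r / 3).
    + apply Rmult_le_reg_r with (2 ^ S m); [apply pow_lt; lra|].
      unfold Rdiv; rewrite Rmult_assoc, Rinv_l by (apply pow_nonzero; lra); nra.
    + destruct (proj1 (Nat.lt_gt_cases i j) Hij) as [Hlt | Hgt].
      * apply Hsep3; lia.
      * rewrite dist_sym; apply Hsep3; lia.
Qed.

Lemma approx_chain_exists N0 C0 m : doubling d N0 ->
  (forall y z, K y -> K z -> d y z <= C0 * d x x') -> 27 * C0 <= 2 ^ S m ->
  M = S (N0 ^ S m) -> exists N p, approx_chain N p.
Proof.
  intros Hdbl Kdiam Hm HM.
  pose proof (partial_chain_length N0 C0 m) as Hlength.
  set (L := (N0 ^ S m)%nat) in *.
  assert (Hgrow : forall k, (k <= L)%nat ->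
            (exists N p, approx_chain N p) \/ exists p, partial_chain k p).
  { induction k as [|k IH]; intros Hk.
    - right; exists (fun _ => x); apply partial_chain_start.
    - destruct (IH ltac:(lia)) as [Hdone | [p Hp]]; [now left|].
      destruct (Rle_lt_dec (d (p k) x') (target r M k)) as [Hstop | Hgo].
      + left; exists (S k), (update p (S k) x'); apply partial_chain_stop; auto; lia.
      + destruct (partial_chain_extend k p Hp Hgo ltac:(lia) ltac:(lia)) as [q Hq].
        right; eauto. }
  destruct (Hgrow L (le_n _)) as [Hdone | [p Hp]]; auto.
  specialize (Hlength L p Hdbl Kdiam Hm ltac:(lia) ltac:(lia) Hp); lia.
Qed.

End Greedy.

Definition exact_chain (K : X -> Prop) (x x' : X) (r : R) (M N : nat) (p : nat -> X) : Prop :=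
  p O = x /\ p N = x' /\ (forall j, (j <= N)%nat -> K (p j)) /\ (2 <= N <= M)%nat /\
  (forall j, (S j < N)%nat -> d (p j) (p (S j)) = target r M j) /\
  d (p (N - 1)%nat) (p N) <= target r M (N - 1).

(* Pigeonhole fixes the length [N] along infinitely many approximations,
   compactness of [K] makes their points converge, and the gap bounds pass to
   the limit. *)
Lemma exact_chain_of_approx K x x' r M : compact_set d K ->
  (forall n, exists N p, approx_chain K x x' r M (/ INR (S n)) N p) ->
  exists N p, exact_chain K x x' r M N p.
Proof.
  intros Kcomp Happrox.
  destruct (functional_choice
    (fun n Np => approx_chain K x x' r M (/ INR (S n)) (fst Np) (snd Np))) as [f Hf].
  { intros n; destruct (Happrox n) as [N [p Hp]]; now exists (N, p). }
  destruct (infinite_pigeonhole M (fun n => fst (f n))) as [N HNinf].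
  { intros n; apply (Hf n). }
  destruct (infinite_subseq_converges_tuple K Kcomp (S N) _ (fun n => snd (f n)) HNinf)
    as [p [J [Kp [Jinf [JN Hconv]]]]].
  { intros n j Hn Hj; apply (Hf n); simpl in Hn; lia. }
  assert (HfJ : forall n, J n -> approx_chain K x x' r M (/ INR (S n)) N (snd (f n))).
  { intros n Jn; rewrite <- (JN n Jn); apply Hf. }
  assert (inv_pos : forall n, 0 < / INR (S n)).
  { intros n; apply Rinv_0_lt_compat, lt_0_INR; lia. }
  destruct (Jinf O) as [n0 [_ Jn0]].
  exists N, p; split; [|split; [|split; [|split; [|split]]]].
  - apply (limit_const J (fun n => snd (f n) O));
      [auto | apply Hconv; lia | intros n Jn; apply (HfJ n Jn)].
  - apply (limit_const J (fun n => snd (f n) N));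
      [auto | apply Hconv; lia | intros n Jn; apply (HfJ n Jn)].
  - intros j Hj; apply Kp; lia.
  - apply (HfJ n0 Jn0).
  - intros j Hj; apply Rle_antisym.
    + apply (dist_limit_le J (fun n => snd (f n) j) (fun n => snd (f n) (S j)));
        auto; try (apply Hconv; lia).
      intros n Jn; destruct (HfJ n Jn) as [_ [_ [_ [_ [Hgap _]]]]].
      specialize (Hgap j Hj); lra.
    + apply (dist_limit_ge J (fun n => snd (f n) j) (fun n => snd (f n) (S j)));
        auto; try (apply Hconv; lia).
      intros n Jn; apply (HfJ n Jn); auto.
  - apply (dist_limit_le J (fun n => snd (f n) (N - 1)%nat) (fun n => snd (f n) N));
      auto; try (apply Hconv; lia).
    intros n Jn; destruct (HfJ n Jn) as [_ [_ [_ [_ [_ Hlast]]]]].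
    specialize (inv_pos n); lra.
Qed.

Lemma exact_chain_gaps K x x' r M N p : exact_chain K x x' r M N p ->
  forall j, (1 <= j <= N - 1)%nat ->
    d (p j) (p (S j)) <= d (p (j - 1)%nat) (p j) - r / (3 * INR M) /\
    ((j < N - 1)%nat -> d (p j) (p (S j)) = d (p (j - 1)%nat) (p j) - r / (3 * INR M)).
Proof.
  intros [_ [_ [_ [HN [Hexact Hlast]]]]] j Hj.
  assert (Hprev : d (p (j - 1)%nat) (p j) = target r M (j - 1)).
  { replace j with (S (j - 1)) at 2 by lia; apply Hexact; lia. }
  rewrite Hprev, <- target_S; replace (S (j - 1)) with j by lia.
  split; [|intros; apply Hexact; lia].
  destruct (Nat.eq_dec j (N - 1)) as [-> | Hne].
  - now replace (S (N - 1)) with N by lia.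
  - rewrite Hexact by lia; lra.
Qed.

End MetricSpace.

Theorem mainTheorem14 :
  forall (N0 : nat) (C0 : R),
  exists M : nat, (0 < M)%nat /\
  forall (X : Type) (d : X -> X -> R),
    is_metric d -> doubling d N0 -> bounded_turning d C0 ->
    forall (r : R) (x x' : X), 0 < r -> d x x' = 8 * r ->
    exists (N : nat) (p : nat -> X),
      (N <= M)%nat /\ p 0%nat = x /\ p N = x' /\
      (forall j, (j <= N)%nat -> d x (p j) <= C0 * d x x') /\
      d (p 0%nat) (p 1%nat) = 2 * r / 3 /\
      (forall j, (1 <= j)%nat -> (j <= N - 1)%nat ->
         d (p j) (p (S j)) <= d (p (j - 1)%nat) (p j) - r / (3 * INR M)) /\
      (forall j, (1 <= j)%nat -> (j < N - 1)%nat ->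
         d (p j) (p (S j)) = d (p (j - 1)%nat) (p j) - r / (3 * INR M)).
Proof.
  intros N0 C0; destruct (pow2_unbounded (27 * C0)) as [m Hm].
  exists (S (N0 ^ S m)); split; [lia|].
  intros X d d_metric Hdbl Hbt r x x' r_pos dxx'.
  destruct (Hbt x x') as [K [[_ [Kcomp Kconn]] [Kx [Kx' Kdiam]]]].
  destruct (exact_chain_of_approx d d_metric K x x' r (S (N0 ^ S m))) as [N [p Hp]]; auto.
  { intros n; apply (approx_chain_exists d d_metric K x x' r _ _ Kconn Kx Kx' r_pos dxx'
      (Rinv_0_lt_compat _ (lt_0_INR _ (Nat.lt_0_succ n))) N0 C0 m); auto. }
  pose proof (exact_chain_gaps d K x x' r _ N p Hp) as Hgaps.
  destruct Hp as [p0 [pN [Kp [HN [Hexact _]]]]].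
  exists N, p; split; [apply HN | split; [exact p0 | split; [exact pN | split; [|split]]]].
  - intros j Hj; apply Kdiam; auto.
  - rewrite Hexact by lia; unfold target; simpl; ring.
  - split; intros j H1 H2; apply Hgaps; lia.
Qed.
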